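(* Let $0<a<1/2$, $0\le c\le\sqrt2$, $A\in\{0,1\}$, and let $J,K,M\ge0$ be constants. Then the integral $$\int_0^\infty\int_{-\infty}^\infty s^J\sqrt{a^2+v^2}^{\,-M}\sqrt{(s^2+1/2-a)^2+v^2}^{\,-K}\sqrt{(s^2+1-a-sc)^2+v^2}^{\,-A}\,dv\,ds$$ converges provided $J-2K-2A<-1$ and $J-2K-2A+1-2M<-2$. *)

From HB Require Import structures.
From mathcomp Require Import all_boot all_order all_algebra.
From mathcomp Require Import all_classical all_reals all_analysis.
Set Implicit Arguments. Unset Strict Implicit. Unset Printing Implicit Defensive.
Import Order.TTheory GRing.Theory Num.Theory.
Local Open Scope ring_scope.

Definition integrand5p4 (R : realType) (a c : R) (A : nat) (J K M : R)
  (s v : R) : R :=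
  s `^ J
  * (Num.sqrt (a ^+ 2 + v ^+ 2)) `^ (- M)
  * (Num.sqrt ((s ^+ 2 + 2^-1 - a) ^+ 2 + v ^+ 2)) `^ (- K)
  * (Num.sqrt ((s ^+ 2 + 1 - a - s * c) ^+ 2 + v ^+ 2)) `^ (- A%:R).

(* The integrand is dominated on s > 0 by a product C (1 + s)^-q (a + |v|)^-P,
   which is Lebesgue integrable on R x R by Tonelli as soon as q, P > 1.
   Write k = 1/2 - a.  We use s^J <= (1 + s)^J and sqrt(a^2 + v^2) >= (a + |v|)/2.
   The centres s^2 + 1/2 - a and s^2 + 1 - a - s c are both >= k/2 (1 + s^2)
   (the second because c^2 <= 2), so each of the two remaining radii X is at least
   both k/4 (1 + s)^2 and k/2 (a + |v|).  Splitting its exponent with a weight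
   al in [0, 1], X^-K <= (k/4 (1 + s)^2)^(-al K) (k/2 (a + |v|))^(-(1 - al) K),
   which gives q = 2 al (K + A) - J and P = M + (1 - al) (K + A); the two hypotheses
   on J, K, A, M are exactly what is needed to pick al with q > 1 and P > 1. *)

From HB Require Import structures.
From mathcomp Require Import all_boot all_order all_algebra.
From mathcomp Require Import all_classical all_reals all_analysis.
From mathcomp Require Import measurable_realfun lra.
Set Implicit Arguments. Unset Strict Implicit. Unset Printing Implicit Defensive.
Import Order.TTheory GRing.Theory Num.Theory.
Import numFieldNormedType.Exports.
Local Open Scope classical_set_scope.
Local Open Scope ring_scope.

Section powR_shift.
Context {R : realType}.
Local Notation mu := (@lebesgue_measure R).
Implicit Types b p r x : R.

Lemma is_derive_powR_shift b r x : 0 < b + x ->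
  is_derive x 1 (fun y => (b + y) `^ r) (r * (b + x) `^ (r - 1)).
Proof.
move=> bx0; rewrite -[X in is_derive _ _ _ X]mulr1.
have shift : is_derive x 1 (fun y => b + y) 1.
  by have := @is_deriveD R R R (cst b) id x 1 0 1 _ _; rewrite add0r; apply.
exact (is_derive1_comp (is_derive1_powR r bx0) shift).
Qed.

Lemma continuous_powR_shift_norm b p : 0 < b ->
  continuous (fun x => (b + `|x|) `^ p).
Proof.
move=> b0 x; apply: (@continuous_comp _ _ _ (fun x : R => b + `|x|) (@powR R ^~ p)).
  by apply: continuousD; [exact: cst_continuous | exact: norm_continuous].
have [dpow _] := is_derive1_powR p (ltr_wpDr (normr_ge0 x) b0).
exact/differentiable_continuous/derivable1_diffP.
Qed.

Lemma powR_shift_cvgy b r : 0 < b -> r < 0 -> (b + x) `^ r @[x --> +oo] --> 0.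
Proof.
move=> b0 r0; apply/cvgrPdist_lt => e e0.
exists (expR (ln e / r)); split; first exact: num_real.
move=> x Mx; have x0 : 0 < x by apply: lt_trans Mx; exact: expR_gt0.
rewrite sub0r normrN ger0_norm ?powR_ge0 // /powR gt_eqF ?addr_gt0 //.
rewrite -[X in _ < X](lnK e0) ltr_expR mulrC -ltr_ndivrMr //.
rewrite -[X in X < _]expRK ltr_ln ?posrE ?expR_gt0 ?addr_gt0 //.
by apply: lt_trans Mx _; rewrite ltrDr.
Qed.

Lemma integral_powR_shift_itvcy b p : 0 < b -> 1 < p ->
  (\int[mu]_(x in `[0%R, +oo[) ((b + `|x|) `^ (- p))%:E
    = (b `^ (1 - p) / (p - 1))%:E)%E.
Proof.
move=> b0 p1; pose F x := (1 - p)^-1 * (b + x) `^ (1 - p).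
have F'E x : 0 < b + x -> is_derive x 1 F ((b + x) `^ (- p)).
  move=> bx0.
  apply: is_derive_eq (is_deriveZ (1 - p)^-1 (is_derive_powR_shift (1 - p) bx0)) _.
  by rewrite [_ *: _]mulrA mulVf ?subr_eq0 ?lt_eqF // mul1r addrAC subrr add0r.
have -> : (b `^ (1 - p) / (p - 1))%:E = (0 - F 0)%:E.
  by rewrite /F sub0r addr0 -mulNr -invrN opprB mulrC.
apply: ge0_continuous_FTC2y.
- by move=> x _; exact: powR_ge0.
- exact/continuous_subspaceT/continuous_powR_shift_norm.
- rewrite -(mulr0 (1 - p)^-1); apply: cvgMl_tmp.
  by apply: powR_shift_cvgy; rewrite // subr_lt0.
- by move=> x x0; case: (F'E x (addr_gt0 b0 x0)).
- apply: cvg_at_right_filter; apply/differentiable_continuous/derivable1_diffP.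
  by case: (F'E 0); rewrite addr0.
- move=> x; rewrite in_itv /= andbT => x0.
  by rewrite derive1E; case: (F'E x (addr_gt0 b0 x0)) => _ ->; rewrite gtr0_norm.
Qed.

Lemma integrable_powR_shift_norm b p : 0 < b -> 1 < p ->
  mu.-integrable setT (fun x => ((b + `|x|) `^ (- p))%:E).
Proof.
move=> b0 p1; have cf := continuous_powR_shift_norm (p := - p) b0.
apply/integrableP; split.
  by apply/measurable_EFinP; exact: continuous_measurable_fun.
under eq_integral => x _ do rewrite gee0_abs ?lee_fin ?powR_ge0 //.
rewrite ge0_symfun_integralT // => [|x|x]; [|exact: powR_ge0|by rewrite /= normrN].
by rewrite -set_itvcy integral_powR_shift_itvcy // -EFinM ltry.
Qed.
End powR_shift.

Section integrable_prod.
Local Open Scope ereal_scope.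
Context d1 d2 (T1 : measurableType d1) (T2 : measurableType d2) (R : realType).
Variable m1 : {sigma_finite_measure set T1 -> \bar R}.
Variable m2 : {sigma_finite_measure set T2 -> \bar R}.

Lemma integrable_prodM (f : T1 -> R) (g : T2 -> R) :
  (forall x, 0 <= f x)%R -> (forall y, 0 <= g y)%R ->
  m1.-integrable setT (EFin \o f) -> m2.-integrable setT (EFin \o g) ->
  (m1 \x m2).-integrable setT (fun z => (f z.1 * g z.2)%:E).
Proof.
move=> f0 g0 intf intg.
have /measurable_EFinP mf := measurable_int m1 intf.
have /measurable_EFinP mg := measurable_int m2 intg.
have mfg : measurable_fun setT (fun z => (f z.1 * g z.2)%:E).
  apply/measurable_EFinP/measurable_funM.
    exact: measurableT_comp mf measurable_fst.
  exact: measurableT_comp mg measurable_snd.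
apply/(@integrable12ltyP _ _ _ _ _ m1 m2 _ mfg).
under eq_integral => x _ do under eq_integral => y _ do
  rewrite gee0_abs ?lee_fin ?mulr_ge0 //= EFinM.
have inner x : \int[m2]_y ((f x)%:E * (g y)%:E) = (f x)%:E * \int[m2]_y (g y)%:E.
  rewrite ge0_integralZl_EFin // => [y _|]; first by rewrite lee_fin.
  exact/measurable_EFinP.
under eq_integral => x _ do rewrite inner.
have Ig0 : 0 <= \int[m2]_y (g y)%:E by apply: integral_ge0 => y _; rewrite lee_fin.
rewrite ge0_integralZr //; [|exact/measurable_EFinP|by move=> x _; rewrite lee_fin].
apply: lte_mul_pinfty; first by apply: integral_ge0 => x _; rewrite lee_fin.
  exact (integrable_fin_num measurableT intf).
by rewrite ltey_eq (integrable_fin_num measurableT intg).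
Qed.
End integrable_prod.

Section sqrt_bounds.
Context {R : rcfType}.
Implicit Types a k s t v x y : R.

Lemma ler_sqrtr_sqr x y : 0 <= x -> x ^+ 2 <= y -> x <= Num.sqrt y.
Proof. by move=> x0 xy; rewrite -(ger0_norm x0) -sqrtr_sqr ler_wsqrtr. Qed.

Lemma ler_sqrt_sqrDl x y : 0 <= x -> x <= Num.sqrt (x ^+ 2 + y ^+ 2).
Proof. by move=> x0; rewrite ler_sqrtr_sqr // lerDl sqr_ge0. Qed.

Lemma normr_le_sqrt_sqrD x y : `|y| <= Num.sqrt (x ^+ 2 + y ^+ 2).
Proof. by rewrite ler_sqrtr_sqr // real_normK ?num_real // lerDr sqr_ge0. Qed.

Lemma half_addr_norm_le_sqrt_sqrD x y : 0 <= x ->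
  (x + `|y|) / 2 <= Num.sqrt (x ^+ 2 + y ^+ 2).
Proof.
move=> x0; apply: ler_sqrtr_sqr; first by rewrite divr_ge0 ?addr_ge0.
have := sqr_ge0 (x - `|y|); rewrite -[y ^+ 2]real_normK ?num_real // !expr2.
nra.
Qed.

Lemma sqrt_sqrD_gt0 x y : 0 < x -> 0 < Num.sqrt (x ^+ 2 + y ^+ 2).
Proof. by move=> x0; rewrite sqrtr_gt0 ltr_pwDl ?sqr_ge0 ?exprn_gt0. Qed.

Lemma sqrt_sqrD_ge_decay k a s t v : 0 < k <= 1 -> 0 <= a <= 2^-1 ->
  k / 2 * (1 + s ^+ 2) <= t ->
  k / 4 * (1 + s) ^+ 2 <= Num.sqrt (t ^+ 2 + v ^+ 2)
  /\ k / 2 * (a + `|v|) <= Num.sqrt (t ^+ 2 + v ^+ 2).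
Proof.
move=> /andP[k0 k1] /andP[a0 a1] kt.
have ks : 0 <= k * s ^+ 2 by rewrite mulr_ge0 ?sqr_ge0 ?ltW.
have t0 : 0 <= t by lra.
have Xt := ler_sqrt_sqrDl v t0; have Xv := normr_le_sqrt_sqrD t v.
split.
  have := sqr_ge0 (1 - s); have := ler_wpM2l (ltW k0) (sqr_ge0 (1 - s)).
  rewrite !expr2; lra.
have := ler_wpM2l (ltW k0) a1; have := ler_wpM2r (normr_ge0 v) k1.
lra.
Qed.
End sqrt_bounds.

Lemma quadratic_centre_ge {R : realFieldType} (a c s : R) :
  0 <= a <= 2^-1 -> c ^+ 2 <= 2 ->
  (2^-1 - a) / 2 * (1 + s ^+ 2) <= s ^+ 2 + 1 - a - s * c.
Proof.
move=> /andP[a0 a1] c2.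
have h1 : 0 <= (2^-1 + a) * (s - c / 2) ^+ 2.
  by apply: mulr_ge0; [lra | exact: sqr_ge0].
have h2 : 0 <= (2^-1 - a) * (s - c) ^+ 2 by apply: mulr_ge0; [lra | exact: sqr_ge0].
have h3 : 0 <= (3 / 2 - a) * (2 - c ^+ 2) by apply: mulr_ge0; lra.
by move: h1 h2 h3; rewrite !expr2; lra.
Qed.

Section log_bounds.
Context {R : realType}.

Lemma convex_comb_ln_le (al x y z : R) : 0 <= al <= 1 ->
  0 < y <= x -> 0 < z <= x -> al * ln y + (1 - al) * ln z <= ln x.
Proof.
move=> /andP[al0 al1] /andP[y0 yx] /andP[z0 zx].
have lnyx : ln y <= ln x by rewrite ler_ln ?posrE // (lt_le_trans y0).
have lnzx : ln z <= ln x by rewrite ler_ln ?posrE // (lt_le_trans z0).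
have al1' : 0 <= 1 - al by rewrite subr_ge0.
have := ler_wpM2l al0 lnyx; have := ler_wpM2l al1' lnzx.
lra.
Qed.

Lemma ln_sqrt_sqrD_ge (al k a s t v : R) : 0 <= al <= 1 -> 0 < k <= 1 ->
  0 < a <= 2^-1 -> 0 <= s -> k / 2 * (1 + s ^+ 2) <= t ->
  al * (ln (k / 4) + 2 * ln (1 + s)) + (1 - al) * (ln (k / 2) + ln (a + `|v|))
    <= ln (Num.sqrt (t ^+ 2 + v ^+ 2)).
Proof.
move=> al01 k01 /andP[a0 a1] s0 kt; have /andP[k0 _] := k01.
have a01 : 0 <= a <= 2^-1 by rewrite ltW.
have [XY XW] := sqrt_sqrD_ge_decay v k01 a01 kt.
have Y0 : 0 < 1 + s by lra.
have W0 : 0 < a + `|v| by rewrite ltr_pwDl.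
have XY0 : 0 < k / 4 * (1 + s) ^+ 2 by rewrite mulr_gt0 ?divr_gt0 ?exprn_gt0.
have XW0 : 0 < k / 2 * (a + `|v|) by rewrite mulr_gt0 ?divr_gt0.
have -> : ln (k / 4) + 2 * ln (1 + s) = ln (k / 4 * (1 + s) ^+ 2).
  by rewrite [RHS]lnM ?posrE ?divr_gt0 ?exprn_gt0 // lnXn // mulr_natl.
have -> : ln (k / 2) + ln (a + `|v|) = ln (k / 2 * (a + `|v|)).
  by rewrite [RHS]lnM ?posrE ?divr_gt0.
by apply: convex_comb_ln_le; rewrite ?XY0 ?XW0.
Qed.

Lemma ln_half_addr_norm_le_ln_sqrt_sqrD (x y : R) : 0 < x ->
  ln (2^-1) + ln (x + `|y|) <= ln (Num.sqrt (x ^+ 2 + y ^+ 2)).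
Proof.
move=> x0; have xy0 : 0 < x + `|y| by rewrite ltr_pwDl.
have := half_addr_norm_le_sqrt_sqrD y (ltW x0); rewrite mulrC => le_xy.
by rewrite -lnM ?posrE // ler_ln ?posrE ?mulr_gt0 // (lt_le_trans _ le_xy) ?mulr_gt0.
Qed.

Lemma integrand5p4_le_separable (a c : R) (A : nat) (J K M al : R) :
  0 < a < 2^-1 -> c ^+ 2 <= 2 -> 0 <= J -> 0 <= K -> 0 <= M -> 0 <= al <= 1 ->
  let S := K + A%:R in
  exists2 C, 0 < C & forall s v, 0 < s ->
    integrand5p4 a c A J K M s v
    <= C * (1 + s) `^ (- (2 * al * S - J)) * (a + `|v|) `^ (- (M + (1 - al) * S)).
Proof.
move=> /andP[a0 a1] c2 J0 K0 M0 al01 S; set k := 2^-1 - a.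
exists (expR (- M * ln (2^-1) - S * (al * ln (k / 4) + (1 - al) * ln (k / 2)))).
  exact: expR_gt0.
move=> s v s0.
have k01 : 0 < k <= 1 by rewrite /k; apply/andP; split; lra.
have a01 : 0 < a <= 2^-1 by rewrite a0 ltW.
have t2 : k / 2 * (1 + s ^+ 2) <= s ^+ 2 + 2^-1 - a.
  by have := sqr_ge0 s; rewrite /k; nra.
have t3 : k / 2 * (1 + s ^+ 2) <= s ^+ 2 + 1 - a - s * c.
  by apply: (quadratic_centre_ge s _ c2); rewrite (ltW a0) (ltW a1).
have kt0 : 0 < k / 2 * (1 + s ^+ 2).
  have /andP[k0 _] := k01; have s2 := sqr_ge0 s.
  by apply: mulr_gt0; [rewrite divr_gt0 | lra].
have X1 := sqrt_sqrD_gt0 v a0.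
have X2 := sqrt_sqrD_gt0 v (lt_le_trans kt0 t2).
have X3 := sqrt_sqrD_gt0 v (lt_le_trans kt0 t3).
have Y0 : 0 < 1 + s by lra.
have W0 : 0 < a + `|v| by rewrite ltr_pwDl.
have lns : ln s <= ln (1 + s) by rewrite ler_ln ?posrE // lerDr.
rewrite /integrand5p4 /powR !gt_eqF // -!expRD ler_expR /S.
have := ler_wpM2l J0 lns.
have := ler_wpM2l M0 (ln_half_addr_norm_le_ln_sqrt_sqrD v a0).
have := ler_wpM2l K0 (ln_sqrt_sqrD_ge v al01 k01 a01 (ltW s0) t2).
have := ler_wpM2l (ler0n R A) (ln_sqrt_sqrD_ge v al01 k01 a01 (ltW s0) t3).
lra.
Qed.
End log_bounds.

Lemma exists_interpolation_weight {R : realFieldType} (J M S : R) :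
  0 <= J -> J + 1 < 2 * S -> J + 3 < 2 * S + 2 * M ->
  exists2 al, 0 <= al <= 1 & (1 < 2 * al * S - J) && (1 < M + (1 - al) * S).
Proof.
move=> J0 gap1 gap2.
have [d [d0 d1 d2]] :
    exists d, [/\ 0 < d, d < 2 * S - J - 1 & d < 2 * S + 2 * M - J - 3].
  have [le12|lt21] := leP (2 * S - J - 1) (2 * S + 2 * M - J - 3).
    by exists ((2 * S - J - 1) / 2); split; lra.
  by exists ((2 * S + 2 * M - J - 3) / 2); split; lra.
have S20 : 0 < 2 * S by lra.
exists ((J + 1 + d) / (2 * S)).
  by rewrite divr_ge0 ?ler_pdivrMr //=; lra.
have alE : (J + 1 + d) / (2 * S) * (2 * S) = J + 1 + d by rewrite mulfVK ?gt_eqF.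
by apply/andP; split; lra.
Qed.

Lemma integrand5p4_ge0 (R : realType) (a c : R) (A : nat) (J K M s v : R) :
  0 <= integrand5p4 a c A J K M s v.
Proof. by rewrite /integrand5p4 !mulr_ge0 ?powR_ge0. Qed.

Lemma measurable_integrand5p4 (R : realType) (a c : R) (A : nat) (J K M : R) :
  measurable_fun setT (fun p : R * R => integrand5p4 a c A J K M p.1 p.2).
Proof.
rewrite /integrand5p4.
repeat first [exact: measurable_cst | exact: measurable_fst | exact: measurable_snd
  | apply: measurable_funM | apply: measurable_funB | apply: measurable_funD
  | apply: measurable_funX | apply: measurableT_comp (measurable_powR _) _
  | apply: measurableT_comp (continuous_measurable_fun (@sqrt_continuous R)) _].
Qed.

Theorem lemma5p4 (R : realType) (a c : R) (A : nat) (J K M : R)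
  (ha0 : 0 < a) (ha1 : a < 2^-1) (hc0 : 0 <= c) (hc1 : c <= Num.sqrt 2)
  (hA : (A <= 1)%N) (hJ : 0 <= J) (hK : 0 <= K) (hM : 0 <= M)
  (h1 : J - 2 * K - 2 * A%:R < -1)
  (h2 : J - 2 * K - 2 * A%:R + 1 - 2 * M < -2) :
  ((@lebesgue_measure R) \x (@lebesgue_measure R))%E.-integrable
    (`]0, +oo[%classic `*` setT)
    (fun p : R * R => (integrand5p4 a c A J K M p.1 p.2)%:E).
Proof.
have c2 : c ^+ 2 <= 2 by have := ler_pM hc0 hc0 hc1 hc1; rewrite -!expr2 sqr_sqrtr.
have [al al01 /andP[q1 P1]] :=
  @exists_interpolation_weight _ J M (K + A%:R) hJ ltac:(lra) ltac:(lra).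
have ha : 0 < a < 2^-1 by rewrite ha0 ha1.
have [C C0 le_integrand] := integrand5p4_le_separable A ha c2 hJ hK hM al01.
have gh := integrable_prodM (m1 := lebesgue_measure) (m2 := lebesgue_measure)
  (fun s => powR_ge0 _ _) (fun v => powR_ge0 _ _)
  (integrable_powR_shift_norm ltr01 q1) (integrable_powR_shift_norm ha0 P1).
have dom := integrableZl measurableT C gh.
apply: (le_integrable _ _ _ (integrableS measurableT _ (subsetT _) dom)).
1,4: by apply: measurableX => //; exact: measurable_itv.
  by apply: measurable_funTS; apply/measurable_EFinP; exact: measurable_integrand5p4.
move=> [s v] [/= s0 _]; rewrite in_itv /= andbT in s0.
rewrite lee_fin (gtr0_norm s0) mulrA ger0_norm ?integrand5p4_ge0 // ger0_norm.
  exact: le_integrand.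
by rewrite !mulr_ge0 ?powR_ge0 ?(ltW C0).
Qed.
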